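(* Let $p\ge3$ be prime and $A,\chi,\gamma_k$ as in the context. For every $n\in[3,p-1]$, \[\chi\circ\gamma_{n-1}+\gamma_{n-1}\circ\chi=m_1(\gamma_n).\]
   Context: Let $p\ge3$ be prime, $l:=2(p-1)$; $\omega(i):=r+1$ if $i=jl+r$ with $0\le r\le p-2$, and $\omega(i):=l-r$ if $p-1\le r\le l-1$. Let $P_1,\dots,P_{p-1}$ and $e_k$ (identity of $P_k$), $e_{1,1},e_{p-1,p-1},e_{k+1,k}:P_k\to P_{k+1},e_{k,k+1}:P_{k+1}\to P_k$ be as follows: with $\Gamma=\prod_{\lambda\vdash p}\mathbb{Z}_{(p)}^{n_\lambda\times n_\lambda}$ ($n_\lambda$ = Specht module rank), hooks $\lambda^k=(p-k+1,1^{k-1})$, $n^k_{\rm b}=\binom{p-2}{k-1}$, $n^k_{\rm c}=\binom{p-2}{k-2}$, $\Lambda=\{\rho\in\Gamma:\rho^{\lambda^k}_{\rm bb}\equiv\rho^{\lambda^{k+1}}_{\rm cc}\bmod p,\ \rho^{\lambda^k}_{\rm bc}\equiv0\bmod p\}$ (blocks ${\rm cc}$ upper-left $n^k_{\rm c}\times n^k_{\rm c}$, ${\rm bc}$ upper-right, ${\rm bb}$ lower-right), $\mathbb{F}_p\mathfrak{S}_p$ identified with $\Lambda/p\Lambda$ via the known isomorphism $\mathbb{Z}_{(p)}\mathfrak{S}_p\cong\Lambda$, matrix units $\eta_{\lambda,i,j}$, $\tilde e_k=\eta_{\lambda^k,n^k_{\rm c}+1,n^k_{\rm c}+1}+\eta_{\lambda^{k+1},1,1}$,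 $P_k=\tilde e_k\Lambda/p\tilde e_k\Lambda$, maps induced by left multiplication with $p\eta_{\lambda^1,1,1}$, $p\eta_{\lambda^p,1,1}$, $\eta_{\lambda^{k+1},n^{k+1}_{\rm c}+1,1}$, $p\eta_{\lambda^{k+1},1,n^{k+1}_{\rm c}+1}$. Resolution $\mathcal P$: $\mathcal P_i=P_{\omega(i)}$ ($i\ge0$), $0$ ($i<0$), $d_i=e_{\omega(i-1),\omega(i)}$. $\operatorname{Hom}^z(C,C')=\prod_i\operatorname{Hom}(C_{i+z},C'_i)$, composition componentwise; $\lfloor g\rfloor^y_x$ ($g:C_x\to C'_y$) has $g$ as its $y$-th component, zero elsewhere. $A=\bigoplus_z\operatorname{Hom}^z_{\mathbb{F}_p\mathfrak{S}_p}(\mathcal P,\mathcal P)$, $m_1(g)=d\circ g-(-1)^zg\circ d$ for $g\in A^z$, $d=\sum_i\lfloor d_{i+1}\rfloor^i_{i+1}$. $\chi:=\sum_{i\ge0}(\lfloor e_1\rfloor^{il}_{il+l-1}+\sum_{k=1}^{p-2}\lfloor e_{k+1,k}\rfloor^{il+k}_{il+l-1+k}+\lfloor e_{p-1}\rfloor^{il+p-1}_{il+l-1+p-1}+\sum_{k=1}^{p-2}\lfloor e_{p-k-1,p-k}\rfloor^{il+p-1+k}_{il+l-1+p-1+k})$; $\gamma_k:=\sum_{i\ge0}(\lfloor e_k\rfloor^{k-1+li}_{k(l-1)+li}+\lfloor e_{p-k}\rfloor^{k-1+(p-1)+li}_{k(l-1)+(p-1)+li})$ for $k\in[2,p-1]$.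 *)

From HB Require Import structures.
From mathcomp Require Import all_boot all_order all_algebra.
Unset Printing Implicit Defensive.
Import Order.TTheory GRing.Theory Num.Theory.
Local Open Scope ring_scope.

Definition ell (p : nat) : nat := (2 * p.-1)%N.

Definition omega (p i : nat) : nat :=
  let r := (i %% ell p)%N in if (r <= p - 2)%N then r.+1 else (ell p - r)%N.

(* Gamma restricted to the hook components: component j : 'I_p is the
   lambda^{j+1} = (p-j, 1^j) component, of Specht rank C(p-1, j).
   Entries are rationals; Z_(p) is the subring of p-integral ones (see inLam). *)
Definition gam (p : nat) := forall j : 'I_p, 'M[rat]_('C(p.-1, j)).

Definition gzero p : gam p := fun j => 0.
Definition gadd p (x y : gam p) : gam p := fun j => x j + y j.
Definition gopp p (x : gam p) : gam p := fun j => - x j.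
Definition gscale p (c : rat) (x : gam p) : gam p := fun j => c *: x j.
Definition gmul p (x y : gam p) : gam p := fun j => x j *m y j.

Definition pint (p : nat) (x : rat) : bool := ~~ (p %| absz (denq x))%N.
Definition peq (p : nat) (a b : rat) : bool := pint p ((a - b) / p%:R).

(* n^k_c and n^k_b (k is 1-based) *)
Definition nc (p k : nat) : nat := if (k < 2)%N then 0%N else 'C(p - 2, k - 2).
Definition nb (p k : nat) : nat := 'C(p - 2, k.-1).

(* entry (a,b) (0-based) of the lambda^k component (k 1-based); 0 if out of range *)
Definition gent p (x : gam p) (k a b : nat) : rat :=
  if (0 < k)%N then
    match (insub k.-1 : option 'I_p) with
    | Some j =>
        match (insub a : option 'I_('C(p.-1, j))), (insub b : option 'I_('C(p.-1, j))) with
        | Some a', Some b' => x j a' b'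
        | _, _ => 0
        end
    | None => 0
    end
  else 0.

Definition inLam p (x : gam p) : Prop :=
  (forall j a b, pint p (x j a b)) /\
  forall k, (1 <= k <= p.-1)%N ->
    (forall a b, (a < nb p k)%N -> (b < nb p k)%N ->
       peq p (gent p x k (nc p k + a) (nc p k + b)) (gent p x k.+1 a b)) /\
    (forall a b, (a < nc p k)%N -> (b < nb p k)%N ->
       peq p (gent p x k a (nc p k + b)) 0).

(* matrix unit eta_{lambda^k, a, b} (1-based indices) *)
Definition eta p (k a b : nat) : gam p :=
  fun j => \matrix_(r, c)
    (if [&& (nat_of_ord j).+1 == k, (nat_of_ord r).+1 == a & (nat_of_ord c).+1 == b]
     then 1 else 0).

Definition etil p (k : nat) : gam p :=
  gadd p (eta p k (nc p k).+1 (nc p k).+1) (eta p k.+1 1 1).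

(* P_k = etil_k Lambda / p etil_k Lambda: x is a representative in etil_k Lambda *)
Definition inP p (k : nat) (x : gam p) : Prop :=
  exists rho, inLam p rho /\ x = gmul p (etil p k) rho.
(* x lies in p etil_k Lambda, i.e. represents 0 in P_k *)
Definition inpP p (k : nat) (x : gam p) : Prop :=
  exists rho, inLam p rho /\ x = gscale p p%:R (gmul p (etil p k) rho).

(* maps, acting on representatives *)
Definition map p := gam p -> gam p.
Definition mzero p : map p := fun _ => gzero p.
Definition lmul p (c : gam p) : map p := fun x => gmul p c x.
Definition eid p : map p := fun x => x.
Definition e11 p : map p := lmul p (gscale p p%:R (eta p 1 1 1)).
Definition epp p : map p := lmul p (gscale p p%:R (eta p p 1 1)).
Definition e_up p (k : nat) : map p := lmul p (eta p k.+1 (nc p k.+1).+1 1).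
Definition e_down p (k : nat) : map p := lmul p (gscale p p%:R (eta p k.+1 1 (nc p k.+1).+1)).

(* e_{a,b} : P_b -> P_a  (one of e_{k+1,k}, e_{k,k+1}, e_{1,1}, e_{p-1,p-1}) *)
Definition ehom p (a b : nat) : map p :=
  if a == b.+1 then e_up p b
  else if b == a.+1 then e_down p a
  else if (a == 1%N) && (b == 1%N) then e11 p
  else if (a == p.-1) && (b == p.-1) then epp p
  else mzero p.

(* A homogeneous element of Hom^z(P,P): component i : P_{omega(i+z)} -> P_{omega i}
   (all degrees used here are >= 0, and P_i = 0 for i < 0, so i ranges over nat). *)
Definition hom p := nat -> map p.

Definition hcomp p (z1 : nat) (f g : hom p) : hom p := fun i x => f i (g (i + z1) x).
Definition hadd p (f g : hom p) : hom p := fun i x => gadd p (f i x) (g i x).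

Definition dd p : hom p := fun i => ehom p (omega p i) (omega p i.+1).

Definition m1 p (z : nat) (g : hom p) : hom p :=
  fun i x => gadd p (hcomp p 1 (dd p) g i x)
                  (gopp p (gscale p ((-1) ^+ z) (hcomp p z g (dd p) i x))).

(* equality in Hom^z(P,P): componentwise equality of the induced maps on the quotients *)
Definition homEq p (z : nat) (f g : hom p) : Prop :=
  forall i x, inP p (omega p (i + z)) x ->
    inpP p (omega p i) (gadd p (f i x) (gopp p (g i x))).

(* chi: component at target index y (the unique bracket of the defining sum with
   target y), of degree l-1 *)
Definition chi p : hom p := fun y =>
  let r := (y %% ell p)%N in
  if r == 0%N then eid p
  else if (r < p.-1)%N then e_up p r
  else if r == p.-1 then eid p
  else e_down p (p - (r - p.-1)).-1.

Definition zchi p : nat := (ell p).-1.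

Definition gamma p (k : nat) : hom p := fun y =>
  let r := (y %% ell p)%N in
  if (r == k.-1) || (r == k.-1 + p.-1)%N then eid p else mzero p.

Definition zgam p (k : nat) : nat := (k * (ell p).-1 - k.-1)%N.

From Pilot Require Import Defs.
From HB Require Import structures.
From mathcomp Require Import all_boot all_order all_algebra.
From mathcomp Require Import zify.
From Stdlib Require Import FunctionalExtensionality.
Import GRing.Theory.

(* Components are indexed by their target: d_y : P_omega(y+1) -> P_omega(y).
   Every map occurring here (the identity, e_{k+1,k}, e_{k,k+1}, e_{1,1},
   e_{p-1,p-1} and 0) is left multiplication by a fixed element of Gamma, so
   it sends 0 to 0; hence it suffices to prove the identity componentwise on
   representatives, with literal equality (homEq_pointwise).  The degree of
   gamma_n is odd, so m_1(gamma_n) = d o gamma_n + gamma_n o d (m1_odd), and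
   the identity splits into
     (1)  chi_i o (gamma_{n-1})_{i+l-1} = (gamma_n)_i o d_{i+|gamma_n|},
     (2)  (gamma_{n-1})_i o chi_{i+|gamma_{n-1}|} = d_i o (gamma_n)_{i+1}.
   All components are periodic in the target index with period l, and
   raising the target by one turns gamma_k into gamma_{k+1} (gamma_shift), so
   in (1) and (2) the same component of gamma appears on both sides.  Off its
   support both sides vanish; on the two residues of the support, the
   component of chi and the component of d are the same morphism e_{k+1,k}
   or e_{k,k+1}, a computation with the weight function omega
   (chi_eq_dd_target for (1), chi_eq_dd_source for (2)). *)

Lemma lmul_zero p (c : gam p) : lmul p c (gzero p) = gzero p.
Proof. by apply: functional_extensionality_dep => j; exact: mulmx0. Qed.

Lemma ehom_zero p a b : ehom p a b (gzero p) = gzero p.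
Proof.
by rewrite /ehom /e_up /e_down /e11 /epp; repeat case: ifP => _; rewrite ?lmul_zero.
Qed.

Lemma chi_zero p y : chi p y (gzero p) = gzero p.
Proof. by rewrite /chi /e_up /e_down; repeat case: ifP => _; rewrite ?lmul_zero. Qed.

(* 0 lies in Lambda (here primality of p is used: 0 is p-integral). *)
Lemma inLam_zero p : prime p -> inLam p (gzero p).
Proof.
move=> pp; have pint0 : pint p 0%R.
  by rewrite /pint /= dvdn1; apply: contraTneq pp => ->.
have gent0 k a b : gent p (gzero p) k a b = 0%R.
  rewrite /gent; case: ifP => // _; case: insub => // j.
  by case: insub => // a'; case: insub => // b'; rewrite mxE.
split=> [j a b|k _]; first by rewrite mxE pint0.
by split=> a b _ _; rewrite !gent0 /peq subrr mul0r pint0.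
Qed.

Lemma homEq_pointwise p z (f g : Defs.hom p) :
  prime p -> (forall i x, f i x = g i x) -> homEq p z f g.
Proof.
move=> pp fg i x _; exists (gzero p); split; first exact: inLam_zero.
apply: functional_extensionality_dep => j.
by rewrite /gadd /gopp /gscale /gmul fg subrr mulmx0 scaler0.
Qed.

Lemma m1_odd p z (g : Defs.hom p) i x : odd z ->
  m1 p z g i x = gadd p (dd p i (g (i + 1) x)) (g i (dd p (i + z) x)).
Proof.
move=> oz; apply: functional_extensionality_dep => j.
by rewrite /m1 /gadd /gopp /gscale /hcomp -signr_odd oz expr1 scaleN1r opprK.
Qed.

Lemma gaddC p (x y : gam p) : gadd p x y = gadd p y x.
Proof. by apply: functional_extensionality_dep => j; exact: addrC. Qed.

Lemma ellE p : ell p = 2 * p.-1.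
Proof. by []. Qed.

Lemma modn_wrap L a : L <= a < L + L -> a %% L = a - L.
Proof. by case/andP=> hLa haL; rewrite -{1}(subnKC hLa) modnDl modn_small //; lia. Qed.

(* |chi| = l - 1, so a target shift by |chi| + 1 is a full period *)
Lemma zchi_succ p : 2 <= p -> (zchi p).+1 = ell p.
Proof. by move=> p2; rewrite /zchi ellE; lia. Qed.

(* |gamma_k| = k(l-1) - (k-1) = (k-1) l + (l - 2k + 1) *)
Lemma zgam_mod p k : 1 <= k -> 2 * k <= ell p ->
  zgam p k %% ell p = ell p - 2 * k + 1.
Proof.
move=> k1 kL; rewrite /zgam.
have -> : k * (ell p).-1 - k.-1 = (k - 1) * ell p + (ell p - 2 * k + 1).
  by move: kL; move: (ell p) => L kL; nia.
by rewrite modnMDl modn_small //; lia.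
Qed.

Lemma zgam_odd p k : 1 <= k <= p.-1 -> odd (zgam p k).
Proof.
move=> hk; have -> : zgam p k = (2 * ((k - 1) * p.-1 + p.-1 - k)).+1.
  by rewrite /zgam ellE; nia.
by rewrite /= oddM.
Qed.

Lemma omega_rise {p y r} : y %% ell p = r -> r <= p - 2 -> omega p y = r.+1.
Proof. by rewrite /omega => -> ->. Qed.

Lemma omega_fall {p y r} : y %% ell p = r -> p - 2 < r -> omega p y = ell p - r.
Proof. by rewrite /omega => -> hr; rewrite leqNgt hr. Qed.

Lemma ehom_up p k : ehom p k.+1 k = e_up p k.
Proof. by rewrite /ehom eqxx. Qed.

Lemma ehom_down p k : ehom p k k.+1 = e_down p k.
Proof. by rewrite /ehom (_ : k == k.+2 = false) ?eqxx //; lia. Qed.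

Lemma chi_rise {p y r} : y %% ell p = r -> 0 < r < p.-1 -> chi p y = e_up p r.
Proof. by rewrite /chi => -> /andP[r0 ->]; rewrite eqn0Ngt r0. Qed.

Lemma chi_fall {p y r} : y %% ell p = r -> p.-1 < r ->
  chi p y = e_down p (p - (r - p.-1)).-1.
Proof.
rewrite /chi => -> hr.
by rewrite (_ : r == 0 = false) 1?(_ : r < p.-1 = false) 1?(_ : r == p.-1 = false) //; lia.
Qed.

Definition gamma_support (p k r : nat) : bool := (r == k.-1) || (r == k.-1 + p.-1).

Lemma gammaE p k y :
  gamma p k y = if gamma_support p k (y %% ell p) then eid p else mzero p.
Proof. by []. Qed.

Lemma gamma_mod p k y y' : y %% ell p = y' %% ell p -> gamma p k y = gamma p k y'.
Proof. by rewrite !gammaE => ->. Qed.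

Lemma gamma_shift p k j : 1 <= k <= p - 2 -> gamma p k.+1 j.+1 = gamma p k j.
Proof.
move=> hk; have L0 : 0 < ell p by rewrite ellE; lia.
rewrite !gammaE -[j.+1]addn1 -modnDml; move: (ltn_pmod j L0).
move: (j %% ell p) => r hr; congr (if _ then _ else _).
case: (ltnP r.+1 (ell p)) => hrL.
  by rewrite addn1 modn_small // /gamma_support; lia.
by rewrite addn1 (_ : r.+1 = ell p) ?modnn /gamma_support; rewrite ?ellE in hr hrL *; lia.
Qed.

(* Linear arithmetic on the residues themselves: hypotheses still mentioning
   %% are irrelevant to these goals and only slow lia down. *)
Ltac nat_lia := repeat match goal with H : context [_ %% _] |- _ => clear H end; lia.

Lemma dd_weights {p y a b} : omega p y = a -> omega p y.+1 = b -> dd p y = ehom p a b.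
Proof. by rewrite /dd => -> ->. Qed.

(* Identity (1) on the support: at a target i of gamma_n, chi_i and
   d_{i+|gamma_n|} are both e_{n,n-1} (residue n-1) or both e_{p-n,p-n+1}
   (residue n-1+(p-1)). *)
Lemma chi_eq_dd_target {p n i} : 2 <= n <= p.-1 ->
  gamma_support p n (i %% ell p) -> chi p i = dd p (i + zgam p n).
Proof.
move=> hn; have hL := ellE p.
have hz : zgam p n %% ell p = ell p - 2 * n + 1 by apply: zgam_mod; nat_lia.
case/orP => /eqP ri.
- have r0 : (i + zgam p n) %% ell p = ell p - n.
    by rewrite -modnDm ri hz modn_small; nat_lia.
  have r1 : (i + zgam p n).+1 %% ell p = (ell p - n).+1.
    by rewrite -addn1 -modnDml r0 addn1 modn_small; nat_lia.
  have o0 : omega p (i + zgam p n) = n.-1.+1 by rewrite (omega_fall r0); nat_lia.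
  have o1 : omega p (i + zgam p n).+1 = n.-1 by rewrite (omega_fall r1); nat_lia.
  by rewrite (chi_rise ri) ?(dd_weights o0 o1) ?ehom_up //; nat_lia.
- have r0 : (i + zgam p n) %% ell p = p.-1 - n.
    by rewrite -modnDm ri hz modn_wrap; nat_lia.
  have r1 : (i + zgam p n).+1 %% ell p = p - n.
    by rewrite -addn1 -modnDml r0 addn1 modn_small; nat_lia.
  have o0 : omega p (i + zgam p n) = p - n by rewrite (omega_rise r0); nat_lia.
  have o1 : omega p (i + zgam p n).+1 = (p - n).+1 by rewrite (omega_rise r1); nat_lia.
  rewrite (chi_fall ri) ?(dd_weights o0 o1) ?ehom_down; last nat_lia.
  by congr e_down; nat_lia.
Qed.

(* Identity (2) on the support: at a target i of gamma_k, chi_{i+|gamma_k|}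
   and d_i are both e_{k,k+1} (residue k-1) or both e_{p-k,p-k-1}
   (residue k-1+(p-1)). *)
Lemma chi_eq_dd_source {p k i} : 1 <= k <= p - 2 ->
  gamma_support p k (i %% ell p) -> chi p (i + zgam p k) = dd p i.
Proof.
move=> hk; have hL := ellE p.
have hz : zgam p k %% ell p = ell p - 2 * k + 1 by apply: zgam_mod; nat_lia.
case/orP => /eqP ri.
- have r1 : i.+1 %% ell p = k.
    by rewrite -addn1 -modnDml ri addn1 modn_small; nat_lia.
  have rz : (i + zgam p k) %% ell p = ell p - k.
    by rewrite -modnDm ri hz modn_small; nat_lia.
  have o0 : omega p i = k by rewrite (omega_rise ri); nat_lia.
  have o1 : omega p i.+1 = k.+1 by rewrite (omega_rise r1); nat_lia.
  rewrite (chi_fall rz) ?(dd_weights o0 o1) ?ehom_down; last nat_lia.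
  by congr e_down; nat_lia.
- have r1 : i.+1 %% ell p = k + p.-1.
    by rewrite -addn1 -modnDml ri addn1 modn_small; nat_lia.
  have rz : (i + zgam p k) %% ell p = p.-1 - k.
    by rewrite -modnDm ri hz modn_wrap; nat_lia.
  have o0 : omega p i = (p.-1 - k).+1 by rewrite (omega_fall ri); nat_lia.
  have o1 : omega p i.+1 = p.-1 - k by rewrite (omega_fall r1); nat_lia.
  by rewrite (chi_rise rz) ?(dd_weights o0 o1) ?ehom_up //; nat_lia.
Qed.

Lemma chi_gamma_component p n i x : 2 <= n <= p.-1 ->
  chi p i (gamma p n i x) = gamma p n i (dd p (i + zgam p n) x).
Proof.
move=> hn; rewrite gammaE; case: ifP => supp; last exact: chi_zero.
by rewrite (chi_eq_dd_target hn supp).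
Qed.

Lemma gamma_chi_component p k i x : 1 <= k <= p - 2 ->
  gamma p k i (chi p (i + zgam p k) x) = dd p i (gamma p k i x).
Proof.
move=> hk; rewrite gammaE; case: ifP => supp; last by rewrite /dd ehom_zero.
by rewrite (chi_eq_dd_source hk supp).
Qed.

Theorem mainTheorem8 (p : nat) (hp : prime p) (h3 : (3 <= p)%N)
  (n : nat) (hn : (3 <= n <= p.-1)%N) :
  homEq p (zchi p + zgam p n.-1)
    (hadd p (hcomp p (zchi p) (chi p) (gamma p n.-1))
          (hcomp p (zgam p n.-1) (gamma p n.-1) (chi p)))
    (m1 p (zgam p n) (gamma p n)).
Proof.
have Sn : n = n.-1.+1 by lia.
apply: homEq_pointwise => // i x.
rewrite /hadd /hcomp m1_odd; last by apply: zgam_odd; lia.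
(* the target index i + (l-1) of gamma_{n-1} is i - 1 modulo l *)
have shift_chi : gamma p n.-1 (i + zchi p) = gamma p n i.
  rewrite -gamma_shift; last lia.
  rewrite -Sn; apply: gamma_mod.
  by rewrite -addnS zchi_succ ?modnDr //; lia.
have shift_one : gamma p n (i + 1) = gamma p n.-1 i.
  by rewrite addn1 {1}Sn gamma_shift //; lia.
rewrite shift_chi shift_one gaddC chi_gamma_component; last lia.
by rewrite gamma_chi_component //; lia.
Qed.
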